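(* The minimum set of measurements that must be protected (i.e. made immune to manipulation, so that an attack must satisfy $a_i=0$ for every protected measurement $i$) to guarantee that no nonzero stealthy attack $a=Hc$ can be carried out is obtained by protecting all measurements in $\mathcal{M}^C$: protecting $\mathcal{M}^C$ ensures that no nonzero $a=Hc$ vanishes on $\mathcal{M}^C$, and no set of fewer than $|\mathcal{M}^C|$ protected measurements achieves this guarantee.
   Context: Power network: a connected graph $\mathcal{G}=(\mathcal{N},\mathcal{L})$ with $N$ buses and lines. Linearized (DC) state estimation: measurement set $\mathcal{M}$ of real-power measurements, each a line-flow measurement on a line or an injection measurement at a bus; state $x\in\mathbb{R}^{N-1}$ of bus phase angles (reference fixed); $z=Hx+e$ with Jacobian $H$ whose rows are indexed by $\mathcal{M}$, of full column rank $N-1$. A data injection attack replaces $z$ by $z+a$; it is stealthy if $a=Hc$ for some $c$. Measurement assignment: an injective map $f$ from a set of measurements to lines such that a flow measurement on line $l$ can only be assigned to $l$, and an injection measurement at bus $\eta$ can only be assigned to an unmeasured line (carrying no flow measurement) incident to $\eta$. The system is observable iff some measurement assignment has image forming a spanning tree of $\mathcal{G}$. Fix such an assignment $f$, and let $\mathcal{M}^C$ be the set of measurements assigned by $f$ (so $|\mathcal{M}^C|=N-1$).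
   Formalization: The equivalence between observability of a measurement set and the existence of a measurement assignment whose image forms a spanning tree is a hypothesis, assumed for every measurement set on the network with its given line susceptances. The paper assumes this as well. *)

From mathcomp Require Import all_boot all_order all_algebra.
Set Implicit Arguments. Unset Strict Implicit. Unset Printing Implicit Defensive.
Import Order.TTheory GRing.Theory Num.Theory.
Local Open Scope ring_scope.

(* Network: buses T (a finType, N = #|T|), lines Ln (a finType), each line l
   joins the buses (ends l).1 and (ends l).2 and has susceptance b l.
   Measurements: a measurement is an element of (Ln + T):
     inl l   = real-power flow measurement on line l (oriented .1 -> .2),
     inr eta = real-power injection measurement at bus eta.
   A state is a vector of bus angles c : T -> R with c r = 0 for the
   reference bus r (this is x in R^(N-1)). *)
Notation meas Ln T := (Ln + T)%type.

Definition flow_val (R : nzRingType) (T Ln : finType) (ends : Ln -> T * T)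
  (b : Ln -> R) (l : Ln) (c : T -> R) : R :=
  b l * (c (ends l).1 - c (ends l).2).

(* (H c)_m : the row of the DC Jacobian indexed by measurement m applied to c *)
Definition meas_val (R : nzRingType) (T Ln : finType) (ends : Ln -> T * T)
  (b : Ln -> R) (m : meas Ln T) (c : T -> R) : R :=
  match m with
  | inl l => flow_val ends b l c
  | inr eta => \sum_(l | (ends l).1 == eta) flow_val ends b l c
               - \sum_(l | (ends l).2 == eta) flow_val ends b l c
  end.

(* H restricted to the rows M' has full column rank (observability of M'). *)
Definition observable (R : nzRingType) (T Ln : finType) (ends : Ln -> T * T)
  (b : Ln -> R) (r : T) (M' : {set meas Ln T}) : Prop :=
  forall c : T -> R, c r = 0 ->
    (forall m, m \in M' -> meas_val ends b m c = 0) -> forall i, c i = 0.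

Definition line_adj (T Ln : finType) (ends : Ln -> T * T) (E : {set Ln}) : rel T :=
  fun x y => [exists l in E, (ends l == (x, y)) || (ends l == (y, x))].

Definition connected_lines (T Ln : finType) (ends : Ln -> T * T) (E : {set Ln}) :=
  forall x y : T, connect (line_adj ends E) x y.

Definition acyclic_lines (T Ln : finType) (ends : Ln -> T * T) (E : {set Ln}) :=
  forall l, l \in E -> ~~ connect (line_adj ends (E :\ l)) (ends l).1 (ends l).2.

Definition spanning_tree (T Ln : finType) (ends : Ln -> T * T) (E : {set Ln}) :=
  connected_lines ends E /\ acyclic_lines ends E.

Definition is_assignment (T Ln : finType) (ends : Ln -> T * T)
  (M D : {set meas Ln T}) (f : meas Ln T -> Ln) : Prop :=
  [/\ D \subset M,
      {in D &, injective f},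
      (forall l, inl l \in D -> f (inl l) = l) &
      (forall eta, inr eta \in D ->
         (((ends (f (inr eta))).1 == eta) || ((ends (f (inr eta))).2 == eta))
         /\ inl (f (inr eta)) \notin M)].

From mathcomp Require Import all_boot all_order all_algebra.
Set Implicit Arguments. Unset Strict Implicit. Unset Printing Implicit Defensive.
Import Order.TTheory GRing.Theory Num.Theory.
Local Open Scope ring_scope.

(* Protecting M^C suffices because M^C is itself observable: f is an
   assignment for M^C whose image is a spanning tree.  For minimality, the
   incidence functionals c |-> c u - c v of the lines uv of a forest,
   together with evaluation at one bus, admit a dual family (for each line,
   the indicator of one side of the cut it defines), so they are linearly
   independent and a forest has fewer lines than there are buses; hence
   |M^C| < N.  Fewer than |M^C| protected measurements together with c r = 0
   are then fewer than N homogeneous linear equations on the N bus angles,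
   so they have a nonzero solution, which the observable set M detects. *)

Section DeltaLinear.
Variables (R : comNzRingType) (T : finType).

Definition delta (x : T) : T -> R := fun y => (x == y)%:R.

Definition delta_linear (phi : (T -> R) -> R) :=
  forall c, phi c = \sum_x c x * phi (delta x).

Lemma delta_linear_eval y : delta_linear (fun c => c y).
Proof.
move=> c; rewrite (bigD1 y) //= /delta eqxx mulr1 big1 ?addr0 // => x /negbTE.
by move=> ->; rewrite mulr0.
Qed.

Lemma delta_linearB phi psi : delta_linear phi -> delta_linear psi ->
  delta_linear (fun c => phi c - psi c).
Proof.
move=> Hphi Hpsi c /=; rewrite Hphi Hpsi -sumrB.
by apply: eq_bigr => x _; rewrite mulrBr.
Qed.

Lemma delta_linearZ a phi : delta_linear phi -> delta_linear (fun c => a * phi c).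
Proof.
move=> Hphi c /=; rewrite Hphi mulr_sumr.
by apply: eq_bigr => x _; rewrite mulrCA.
Qed.

Lemma delta_linear_sum (I : finType) (P : pred I) (phi : I -> (T -> R) -> R) :
  (forall i, delta_linear (phi i)) ->
  delta_linear (fun c => \sum_(i | P i) phi i c).
Proof.
move=> Hphi c /=; under eq_bigr => i _ do rewrite Hphi.
by rewrite exchange_big; apply: eq_bigr => x _; rewrite mulr_sumr.
Qed.

End DeltaLinear.

Arguments delta {R T}.

Section Rank.
Variable R : fieldType.

Lemma mx_dual_le s n (F : 'M[R]_(s, n)) (V : 'M[R]_(n, s)) :
  (forall i, (F *m V) i i != 0) -> (forall i j, i != j -> (F *m V) i j = 0) ->
  (s <= n)%N.
Proof.
move=> diag_nz offdiag0.
have FV_diag : F *m V = diag_mx (\row_i (F *m V) i i).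
  apply/matrixP => i j; rewrite [RHS]mxE [in RHS]mxE.
  by case: eqVneq => [->|/offdiag0 ->]; rewrite ?mulr1n ?mulr0n.
have FV_unit : F *m V \in unitmx.
  rewrite FV_diag unitmxE det_diag unitfE; apply/prodf_neq0 => i _.
  by rewrite mxE diag_nz.
rewrite -(mxrank_unit FV_unit).
exact: leq_trans (mxrankM_maxl F V) (rank_leq_col F).
Qed.

Lemma mx_ker_nonzero s n (A : 'M[R]_(s, n)) : (s < n)%N ->
  exists2 v : 'cV_n, v != 0 & A *m v = 0.
Proof.
move=> lt_sn; pose u := nz_row (kermx A^T).
have u_nz : u != 0.
  rewrite nz_row_eq0 -mxrank_eq0 mxrank_ker mxrank_tr -lt0n subn_gt0.
  exact: leq_ltn_trans (rank_leq_row A) lt_sn.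
exists u^T; first by rewrite trmx_eq0.
apply: trmx_inj; rewrite trmx_mul trmxK trmx0.
exact/sub_kermxP/nz_row_sub.
Qed.

End Rank.

Section Functionals.
Variables (R : fieldType) (T I : finType) (phi : I -> (T -> R) -> R).
Hypothesis phi_linear : forall i, delta_linear (phi i).

Let A : 'M[R]_(#|I|, #|T|) := \matrix_(i, j) phi (enum_val i) (delta (enum_val j)).
Let col_of (c : T -> R) : 'cV[R]_#|T| := \col_j c (enum_val j).

Let A_mul_col c i : (A *m col_of c) i 0 = phi (enum_val i) c.
Proof.
rewrite [RHS]phi_linear mxE (big_enum_val (A := T)).
by apply: eq_bigr => j _; rewrite !mxE mulrC.
Qed.

Lemma functionals_card_le :
  (forall i, exists c, phi i c != 0 /\ forall j, j != i -> phi j c = 0) ->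
  (#|I| <= #|T|)%N.
Proof.
move=> /fin_all_exists [c dual].
pose V : 'M[R]_(#|T|, #|I|) := \matrix_(k, j) c (enum_val j) (enum_val k).
have AV i j : (A *m V) i j = phi (enum_val i) (c (enum_val j)).
  by rewrite -A_mul_col !mxE; apply: eq_bigr => k _; rewrite !mxE.
apply: (@mx_dual_le _ _ _ A V) => [i | i j ne_ij]; rewrite AV.
  by have [] := dual (enum_val i).
by have [_ ->] := dual (enum_val j); rewrite // (inj_eq enum_val_inj).
Qed.

Lemma functionals_common_root : (#|I| < #|T|)%N ->
  exists c : T -> R, (forall i, phi i c = 0) /\ exists x, c x != 0.
Proof.
move=> /(mx_ker_nonzero A) [v v_nz Av0].
pose c x := v (enum_rank x) 0.
have vE : col_of c = v by apply/matrixP => j k; rewrite !mxE /c enum_valK (ord1 k).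
exists c; split=> [i | ]; first by rewrite -(enum_rankK i) -A_mul_col vE Av0 mxE.
apply/existsP; apply: contraNT v_nz => /existsPn c0.
by rewrite -vE; apply/eqP/matrixP => j k; rewrite !mxE; apply/eqP/negPn/c0.
Qed.

End Functionals.

Section Forests.
Variables (T Ln : finType) (ends : Ln -> T * T).

Lemma acyclic_lines_cut E l : acyclic_lines ends E -> l \in E ->
  exists K : pred T, K (ends l).1 != K (ends l).2 /\
    forall l', l' \in E -> l' != l -> K (ends l').1 = K (ends l').2.
Proof.
move=> acyc lE; pose K := connect (line_adj ends (E :\ l)) (ends l).1.
exists K; split; first by rewrite /K connect0 (negbTE (acyc l lE)).
move=> l' l'E l'l.
have adj x y : (ends l' == (x, y)) || (ends l' == (y, x)) ->
    line_adj ends (E :\ l) x y.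
  by move=> e; apply/existsP; exists l'; rewrite !inE l'l l'E.
apply/idP/idP => Kx; apply: connect_trans Kx (connect1 (adj _ _ _));
  by rewrite -surjective_pairing eqxx ?orbT.
Qed.

(* The rank argument is run over [rat]; any field would do. *)
Lemma acyclic_lines_card_lt (x0 : T) E : acyclic_lines ends E -> (#|E| < #|T|)%N.
Proof.
move=> acyc; rewrite -card_sig -card_option.
pose phi (i : option {l | l \in E}) (c : T -> rat) :=
  if i is Some l then c (ends (val l)).1 - c (ends (val l)).2 else c x0.
have phi_linear i : delta_linear (phi i).
  case: i => [l|]; last exact: delta_linear_eval.
  by apply: delta_linearB; exact: delta_linear_eval.
apply: (functionals_card_le phi_linear); case=> [[l lE]|].
- have [K [Kl KE]] := acyclic_lines_cut acyc lE.
  exists (fun x => (K x != K x0)%:R); split.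
    by rewrite /phi /=; move: Kl; do 3!case: (K _).
  case=> [[l' l'E]|] ne; rewrite /phi /=; last by rewrite eqxx.
  by rewrite KE ?subrr.
- exists (fun _ => 1); split; first exact: oner_neq0.
  by case=> [l|] //= _; rewrite subrr.
Qed.

End Forests.

Section Measurements.
Variables (T Ln : finType) (ends : Ln -> T * T).

Lemma is_assignment_sub (M M' D : {set meas Ln T}) (f : meas Ln T -> Ln) :
  D \subset M' -> M' \subset M ->
  is_assignment ends M D f -> is_assignment ends M' D f.
Proof.
move=> DM' M'M [_ f_inj f_inl f_inr]; split=> // eta etaD.
have [f_eta f_unmeasured] := f_inr eta etaD; split=> //.
by apply: contra f_unmeasured => /(subsetP M'M).
Qed.

Section RingMeasurements.
Variables (R : comNzRingType) (b : Ln -> R) (r : T).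

Lemma meas_val_delta_linear m : delta_linear (meas_val ends b m).
Proof.
have flow_linear l : delta_linear (flow_val ends b l).
  by apply: delta_linearZ; apply: delta_linearB; exact: delta_linear_eval.
case: m => [l|eta]; first exact: flow_linear.
by apply: delta_linearB; apply: delta_linear_sum.
Qed.

Lemma observable_meas_val_eq0 (D : {set meas Ln T}) c :
  observable ends b r D -> c r = 0 ->
  (forall m, m \in D -> meas_val ends b m c = 0) ->
  forall m, meas_val ends b m c = 0.
Proof.
move=> obs cr c0 m; rewrite meas_val_delta_linear big1 // => x _.
by rewrite (obs c cr c0 x) mul0r.
Qed.

Lemma observable_detects (M : {set meas Ln T}) c :
  observable ends b r M -> c r = 0 ->
  (exists x, c x != 0) -> exists2 m, m \in M & meas_val ends b m c != 0.
Proof.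
move=> obs cr [x cx]; apply/exists_inP; apply: contraNT cx => /exists_inPn c0.
by apply/eqP; apply: obs cr _ x => m mM; apply/eqP/negPn/c0.
Qed.

End RingMeasurements.

Lemma few_measurements_state (R : fieldType) (b : Ln -> R) (r : T)
    (S : {set meas Ln T}) :
  (#|S|.+1 < #|T|)%N ->
  exists c : T -> R,
    [/\ c r = 0, forall m, m \in S -> meas_val ends b m c = 0 & exists x, c x != 0].
Proof.
rewrite -card_sig -card_option => ltST.
pose phi (i : option {m | m \in S}) : (T -> R) -> R :=
  if i is Some m then meas_val ends b (val m) else fun c => c r.
have phi_linear i : delta_linear (phi i).
  by case: i => [m|]; [exact: meas_val_delta_linear | exact: delta_linear_eval].
have [c [c0 nz]] := functionals_common_root phi_linear ltST.
exists c; split=> // [|m mS]; [exact: c0 None | exact: c0 (Some (exist _ m mS))].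
Qed.

End Measurements.

Theorem theorem6 (R : realFieldType) (T Ln : finType) (ends : Ln -> T * T)
  (b : Ln -> R) (r : T) (M MC : {set meas Ln T}) (f : meas Ln T -> Ln) :
  (forall l, (ends l).1 != (ends l).2) ->
  (forall l, b l != 0) ->
  connected_lines ends [set: Ln] ->
  observable ends b r M ->
  (* standing fact of the context: observability <-> existence of a
     measurement assignment whose image is a spanning tree *)
  (forall M' : {set meas Ln T}, observable ends b r M' <->
     exists (D : {set meas Ln T}) (g : meas Ln T -> Ln),
       is_assignment ends M' D g /\ spanning_tree ends (g @: D)) ->
  is_assignment ends M MC f ->
  spanning_tree ends (f @: MC) ->
  (forall c : T -> R, c r = 0 ->
     (forall m, m \in MC -> meas_val ends b m c = 0) ->
     forall m, m \in M -> meas_val ends b m c = 0)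
  /\
  (forall S : {set meas Ln T}, S \subset M -> (#|S| < #|MC|)%N ->
     exists c : T -> R, [/\ c r = 0,
       (forall m, m \in S -> meas_val ends b m c = 0) &
       exists2 m, m \in M & meas_val ends b m c != 0]).
Proof.
move=> _ _ _ obsM obs_iff assign tree; have [MC_M f_inj _ _] := assign.
have [_ acyc] := tree.
have obsMC : observable ends b r MC.
  apply/obs_iff; exists MC, f; split=> //.
  exact: is_assignment_sub (subxx MC) MC_M assign.
split=> [c cr c0 m _ | S _ ltS]; first exact: observable_meas_val_eq0 obsMC cr c0 m.
have ltMC : (#|MC| < #|T|)%N.
  by rewrite -(card_in_imset f_inj); exact: (acyclic_lines_card_lt r acyc).
have [c [cr cS nz]] := few_measurements_state ends b r (leq_ltn_trans ltS ltMC).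
by exists c; split=> //; exact: observable_detects obsM cr nz.
Qed.
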